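(* Let $K$ be a field, let $A=\{{\bf a}_1,\ldots,{\bf a}_n\}\subset\mathbb{Z}^m$ be a vector configuration with $\mathbb{N}A$ pointed, and let $I_A\subset K[x_1,\ldots,x_n]$ be its toric ideal. Let $s\ge 1$ be an integer. Then: (i) There exist toric ideals $I_{A_1},\ldots,I_{A_s}\subset K[x_1,\ldots,x_n]$ with $I_{A_i}\neq I_A$ for every $1\le i\le s$ such that $I_A=I_{A_1}+\cdots+I_{A_s}$ if and only if there exist a set $C\subset \ker_{\mathbb{Z}}(A)$ such that $\{B({\bf u})\mid {\bf u}\in C\}$ is a minimal system of binomial generators of $I_A$, and sets $C_1,\ldots,C_s$ with $C=\bigcup_{i=1}^s C_i$ and $\mathrm{span}_{\mathbb{Q}}(C_i)\subsetneqq \ker_{\mathbb{Q}}(A)$ for every $1\le i\le s$. (ii) There exist toric ideals $I_{A_1},\ldots,I_{A_s}\subset K[x_1,\ldots,x_n]$ with $I_{A_i}\neq I_A$ for every $1\le i\le s$ such that $I_A=\mathrm{rad}(I_{A_1}+\cdots+I_{A_s})$ if and only if there exist a set $C\subset \ker_{\mathbb{Z}}(A)$ such that $\{B({\bf u})\mid {\bf u}\in C\}$ is a minimal system of binomial generators of $I_A$ up to radical, and sets $C_1,\ldots,C_s$ with $C=\bigcup_{i=1}^s C_i$ and $\mathrm{span}_{\mathbb{Q}}(C_i)\subsetneqq \ker_{\mathbb{Q}}(A)$ for every $1\le i\le s$.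
   Context: For a vector configuration $A=\{{\bf a}_1,\ldots,{\bf a}_n\}\subset\mathbb{Z}^m$, $\ker_{\mathbb{Q}}(A)=\{{\bf u}\in\mathbb{Q}^n\mid u_1{\bf a}_1+\cdots+u_n{\bf a}_n={\bf 0}\}$ and $\ker_{\mathbb{Z}}(A)=\ker_{\mathbb{Q}}(A)\cap\mathbb{Z}^n$; $\mathbb{N}A$ is pointed means $\ker_{\mathbb{Z}}(A)\cap\mathbb{N}^n=\{{\bf 0}\}$. The toric ideal $I_A$ is the kernel of the $K$-algebra map $K[x_1,\ldots,x_n]\to K[t_1^{\pm1},\ldots,t_m^{\pm1}]$, $x_i\mapsto {\bf t}^{{\bf a}_i}$; it is generated by the binomials $B({\bf u})={\bf x}^{{\bf u}^+}-{\bf x}^{{\bf u}^-}$, ${\bf u}\in\ker_{\mathbb{Z}}(A)$, where ${\bf u}^+,{\bf u}^-\in\mathbb{N}^n$ are the positive and negative parts of ${\bf u}={\bf u}^+-{\bf u}^-$. A ''toric ideal in $K[x_1,\ldots,x_n]$'' means $I_{A'}$ for some configuration $A'$ of $n$ vectors in some $\mathbb{Z}^{m'}$ with $\mathbb{N}A'$ pointed. For a set $C\subset\mathbb{Z}^n$, $\mathrm{span}_{\mathbb{Q}}(C)$ is the $\mathbb{Q}$-span of $C$. A set $S$ of binomials is a minimal system of binomial generators of $I_A$ up to radical if $\mathrm{rad}(S)=I_A$ and no proper subset $S'\subsetneqq S$ satisfies $\mathrm{rad}(S')=I_A$; a minimal system of binomial generators of $I_A$ is a set of binomials generating $I_A$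 none of whose proper subsets generates $I_A$. *)

From HB Require Import structures.
From mathcomp Require Import all_boot all_order all_algebra.
From mathcomp Require Export mpoly.
Set Implicit Arguments. Unset Strict Implicit. Unset Printing Implicit Defensive.
Import Order.TTheory GRing.Theory Num.Theory.
Local Open Scope ring_scope.

(* A vector configuration A = {a_1,...,a_n} in Z^m is an m x n integer
   matrix whose columns are the a_i.  Vectors of Z^n / Q^n are functions
   on 'I_n. *)

Definition Aapp (m n : nat) (A : 'M[int]_(m, n)) (u : 'I_n -> int) (j : 'I_m) : int :=
  \sum_(i < n) A j i * u i.

Definition kerZ (m n : nat) (A : 'M[int]_(m, n)) (u : 'I_n -> int) : Prop :=
  forall j : 'I_m, Aapp A u j = 0.

Definition kerQ (m n : nat) (A : 'M[int]_(m, n)) (v : 'I_n -> rat) : Prop :=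
  forall j : 'I_m, \sum_(i < n) (A j i)%:~R * v i = 0.

(* NA is pointed: ker_Z(A) cap N^n = {0} *)
Definition pointed (m n : nat) (A : 'M[int]_(m, n)) : Prop :=
  forall u : 'I_n -> nat, kerZ A (fun i => (u i)%:Z) -> forall i, u i = 0%N.

Definition mexp (n : nat) (mu : 'X_{1..n}) : 'I_n -> int := fun i => (mu i)%:Z.

(* The toric ideal I_A = kernel of x_i |-> t^{a_i} from K[x] to
   K[t^{+-1}] = K[Z^m]: the image of f = sum_mu f_mu x^mu is
   sum_mu f_mu t^{A mu}, which is zero iff, for every b in Z^m, the sum of
   the coefficients f_mu over the monomials mu with A mu = b vanishes. *)
Definition toric (K : fieldType) (m n : nat) (A : 'M[int]_(m, n))
    (f : {mpoly K[n]}) : Prop :=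
  forall b : 'I_m -> int,
    \sum_(mu <- msupp f | [forall j, Aapp A (mexp mu) j == b j]) f@_mu = 0.

Definition same_set (T : Type) (P Q : T -> Prop) : Prop := forall x, P x <-> Q x.
Definition subset_of (T : Type) (P Q : T -> Prop) : Prop := forall x, P x -> Q x.

Definition is_toric_ideal (K : fieldType) (n : nat) (J : {mpoly K[n]} -> Prop) : Prop :=
  exists (m' : nat) (A' : 'M[int]_(m', n)), pointed A' /\ same_set J (toric A').

Definition ideal_gen (K : fieldType) (n : nat) (S : {mpoly K[n]} -> Prop)
    (f : {mpoly K[n]}) : Prop :=
  exists (k : nat) (h g : 'I_k -> {mpoly K[n]}),
    (forall l, S (g l)) /\ f = \sum_(l < k) h l * g l.

Definition sum_ideals (K : fieldType) (n s : nat) (I : 'I_s -> {mpoly K[n]} -> Prop)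
    (f : {mpoly K[n]}) : Prop :=
  exists g : 'I_s -> {mpoly K[n]}, (forall i, I i (g i)) /\ f = \sum_(i < s) g i.

Definition radI (K : fieldType) (n : nat) (J : {mpoly K[n]} -> Prop)
    (f : {mpoly K[n]}) : Prop :=
  exists k : nat, J (f ^+ k).

Definition posp (n : nat) (u : 'I_n -> int) : 'X_{1..n} :=
  [multinom (if (0 <= u i)%R then absz (u i) else 0%N) | i < n].
Definition negp (n : nat) (u : 'I_n -> int) : 'X_{1..n} :=
  [multinom (if (u i < 0)%R then absz (u i) else 0%N) | i < n].

Definition binom (K : fieldType) (n : nat) (u : 'I_n -> int) : {mpoly K[n]} :=
  'X_[posp u] - 'X_[negp u].

Definition binoms (K : fieldType) (n : nat) (C : ('I_n -> int) -> Prop)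
    (p : {mpoly K[n]}) : Prop :=
  exists u, C u /\ p = binom K u.

Definition min_bin_gens (K : fieldType) (n : nat) (S J : {mpoly K[n]} -> Prop) : Prop :=
  same_set (ideal_gen S) J /\
  forall S', subset_of S' S -> same_set (ideal_gen S') J -> subset_of S S'.

Definition min_bin_gens_rad (K : fieldType) (n : nat) (S J : {mpoly K[n]} -> Prop) : Prop :=
  same_set (radI (ideal_gen S)) J /\
  forall S', subset_of S' S -> same_set (radI (ideal_gen S')) J -> subset_of S S'.

Definition spanQ (n : nat) (C : ('I_n -> int) -> Prop) (v : 'I_n -> rat) : Prop :=
  exists (k : nat) (c : 'I_k -> rat) (w : 'I_k -> 'I_n -> int),
    (forall l, C (w l)) /\ forall i, v i = \sum_(l < k) c l * (w l i)%:~R.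

Definition span_proper (m n : nat) (A : 'M[int]_(m, n)) (C : ('I_n -> int) -> Prop) : Prop :=
  subset_of (spanQ C) (kerQ A) /\ exists v, kerQ A v /\ ~ spanQ C v.

(* A toric ideal I_A' lies in I_A exactly when ker(A') lies in ker(A), and
   it is generated by finitely many binomials B(u) (Dickson's lemma).  So if
   I_A = I_A1 + ... + I_As with every I_Ai proper, each ker_Q(A_i) is a proper
   subspace of ker_Q(A), and a minimal subsystem of the union of finite
   binomial generating sets of the I_Ai splits along the A_i.  Conversely, if
   span_Q(C_i) is a proper subspace of ker_Q(A), adding to A a row orthogonal
   to C_i but not to ker_Q(A) gives A_i with C_i in ker(A_i), ker(A_i) a proper
   part of ker(A), and the ideal of B(C) inside I_A1 + ... + I_As inside I_A. *)

From mathcomp Require Import all_boot all_order all_algebra.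
From mathcomp Require Import mpoly.
From mathcomp Require Import boolp zify ring.
Import Order.TTheory GRing.Theory Num.Theory.
Set Implicit Arguments. Unset Strict Implicit. Unset Printing Implicit Defensive.
Local Open Scope ring_scope.

Lemma mem_flatten_ord (T : eqType) (s : nat) (xs : 'I_s -> seq T) x :
  x \in flatten [seq xs i | i <- enum 'I_s] <-> exists i, x \in xs i.
Proof.
split=> [/flattenP [_ /mapP [i _ ->] x_xs] | [i x_xs]]; first by exists i.
by apply/flattenP; exists (xs i) => //; apply: map_f; rewrite mem_enum.
Qed.

Section IdealGen.
Variables (K : fieldType) (n : nat).
Implicit Types (S T J : {mpoly K[n]} -> Prop) (f g h : {mpoly K[n]}).

Lemma ideal_gen_ind S J :
  J 0 -> (forall f g, J f -> J g -> J (f + g)) -> (forall h f, J f -> J (h * f)) ->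
  subset_of S J -> subset_of (ideal_gen S) J.
Proof.
move=> J0 JD JM JS _ [k [h [g [Sg ->]]]].
by elim/big_ind: _ => // l _; apply/JM/JS.
Qed.

Lemma ideal_gen_mem S : subset_of S (ideal_gen S).
Proof.
move=> p Sp; exists 1%N, (fun _ => 1), (fun _ => p); split => //.
by rewrite big_ord1 mul1r.
Qed.

Lemma ideal_gen0 S : ideal_gen S 0.
Proof. by exists 0%N, (fun _ => 0), (fun _ => 0); split; [case | rewrite big_ord0]. Qed.

Lemma ideal_genD S f g : ideal_gen S f -> ideal_gen S g -> ideal_gen S (f + g).
Proof.
move=> [k1 [h1 [g1 [Sg1 ->]]]] [k2 [h2 [g2 [Sg2 ->]]]].
pose glue (F1 : 'I_k1 -> {mpoly K[n]}) (F2 : 'I_k2 -> {mpoly K[n]}) (l : 'I_(k1 + k2)) :=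
  match split l with inl i => F1 i | inr j => F2 j end.
exists (k1 + k2)%N, (glue h1 h2), (glue g1 g2); split.
  by move=> l; rewrite /glue; case: (split l) => i; [apply: Sg1 | apply: Sg2].
by rewrite big_split_ord /glue; congr (_ + _); apply: eq_bigr => i _;
  [rewrite (unsplitK (inl i)) | rewrite (unsplitK (inr i))].
Qed.

Lemma ideal_genM S h f : ideal_gen S f -> ideal_gen S (h * f).
Proof.
move=> [k [hh [g [Sg ->]]]]; exists k, (fun l => h * hh l), g; split => //.
by rewrite mulr_sumr; apply: eq_bigr => l _; rewrite mulrA.
Qed.

Lemma ideal_gen_sum S (I : Type) (r : seq I) (P : pred I) (F : I -> {mpoly K[n]}) :
  (forall i, P i -> ideal_gen S (F i)) -> ideal_gen S (\sum_(i <- r | P i) F i).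
Proof. by move=> SF; elim/big_ind: _ => //; [apply: ideal_gen0 | apply: ideal_genD]. Qed.

Lemma ideal_gen_trans S T : subset_of S (ideal_gen T) -> subset_of (ideal_gen S) (ideal_gen T).
Proof.
by apply: ideal_gen_ind; [apply: ideal_gen0 | apply: ideal_genD | apply: ideal_genM].
Qed.

Lemma ideal_gen_mono S T : subset_of S T -> subset_of (ideal_gen S) (ideal_gen T).
Proof. by move=> ST; apply: ideal_gen_trans => p /ST; apply: ideal_gen_mem. Qed.

Lemma ideal_gen_ext S T : same_set S T -> same_set (ideal_gen S) (ideal_gen T).
Proof. by move=> ST f; split; apply: ideal_gen_mono => p /ST. Qed.

Lemma sum_ideals_mono (s : nat) (I I' : 'I_s -> {mpoly K[n]} -> Prop) :
  (forall i, subset_of (I i) (I' i)) -> subset_of (sum_ideals I) (sum_ideals I').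
Proof. by move=> II' f [g [Ig ->]]; exists g; split=> // i; apply/II'. Qed.

Lemma sum_ideals_ext (s : nat) (I I' : 'I_s -> {mpoly K[n]} -> Prop) :
  (forall i, same_set (I i) (I' i)) -> same_set (sum_ideals I) (sum_ideals I').
Proof. by move=> II' f; split; apply: sum_ideals_mono => i g /II'. Qed.

Lemma sum_ideals_mem (s : nat) (I : 'I_s -> {mpoly K[n]} -> Prop) i :
  (forall j, I j 0) -> subset_of (I i) (sum_ideals I).
Proof.
move=> I0 p Ip; exists (fun j => if j == i then p else 0); split.
  by move=> j; case: eqP => [->|].
by rewrite (bigD1 i) //= eqxx big1 ?addr0 // => j /negbTE ->.
Qed.

Lemma ideal_gen_bigcup (s : nat) (Ss : 'I_s -> {mpoly K[n]} -> Prop) :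
  same_set (ideal_gen (fun p => exists i, Ss i p)) (sum_ideals (fun i => ideal_gen (Ss i))).
Proof.
move=> f; split.
  move=> [k [h [g [Sg ->]]]].
  have /fin_all_exists [sel Ssel] : forall l, exists i, Ss i (g l) by [].
  exists (fun i => \sum_(l < k | sel l == i) h l * g l); split.
    by move=> i; apply: ideal_gen_sum => l /eqP <-; apply/ideal_genM/ideal_gen_mem.
  by rewrite (partition_big sel xpredT).
move=> [g [Sg ->]]; apply: ideal_gen_sum => i _.
by apply: ideal_gen_mono (Sg i) => p Sp; exists i.
Qed.

Lemma radI_mono J J' : subset_of J J' -> subset_of (radI J) (radI J').
Proof. by move=> JJ' f [k /JJ' Jf]; exists k. Qed.

Lemma radI_ext J : subset_of J (radI J).
Proof. by move=> f Jf; exists 1%N; rewrite expr1. Qed.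

Lemma radI_idem J : subset_of (radI (radI J)) (radI J).
Proof. by move=> f [k [l Jf]]; exists (k * l)%N; rewrite exprM. Qed.

End IdealGen.

Section MinimalSubset.
Variables (T : eqType) (P : (T -> Prop) -> Prop).
Hypothesis P_ext : forall S1 S2, same_set S1 S2 -> P S1 -> P S2.

Lemma minimal_subset (s : seq T) : P (fun x => x \in s) ->
  exists2 S, subset_of S (fun x => x \in s) &
    P S /\ forall S', subset_of S' S -> P S' -> subset_of S S'.
Proof.
elim: {s}_.+1 {-2}s (ltnSn (size s)) => // N IH s lt_s_N Ps.
have [min_s|] := pselect (forall S', subset_of S' (fun x => x \in s) -> P S' ->
  subset_of (fun x => x \in s) S'); first by exists (fun x => x \in s).
move=> /existsNP [S' /not_implyP [S's /not_implyP [PS' /existsNP [x /not_implyP [xs S'Nx]]]]].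
pose s' := [seq y <- s | `[< S' y >]].
have S's' : same_set S' (fun y => y \in s').
  by move=> y; rewrite mem_filter; split => [S'y|/andP [/asboolP //]]; rewrite asboolT ?S's.
have lt_s' : (size s' < size s)%N.
  have : has (predC (fun y => `[< S' y >])) s by apply/hasP; exists x; rewrite //= asboolF.
  by rewrite size_filter has_count -(count_predC (fun y => `[< S' y >]) s); lia.
have [S Ss' minS] := IH s' (leq_trans lt_s' lt_s_N) (P_ext S's' PS').
by exists S => // y /Ss' /S's' /S's.
Qed.

End MinimalSubset.

Lemma dickson (T : eqType) (cs : seq (T -> nat)) (P : T -> Prop) :
  exists F : seq T, (forall x, x \in F -> P x) /\
    forall y, P y -> exists2 x, x \in F & all (fun c => c x <= c y)%N cs.
Proof.
elim: cs P => [|c cs IH] P.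
  have [[y0 Py0]|noP] := pselect (exists y, P y).
    by exists [:: y0]; split => [x /[!inE] /eqP -> //|y _]; exists y0; rewrite ?inE.
  by exists [::]; split => // y Py; case: noP; exists y.
have [F [FP Fmin]] := IH P.
pose cmax := (\max_(x <- F) c x)%N.
have /fin_all_exists [Fl Flmin] : forall l : 'I_cmax, exists Fl : seq T,
    (forall x, x \in Fl -> P x /\ c x = l) /\
    forall y, P y /\ c y = l -> exists2 x, x \in Fl & all (fun c => c x <= c y)%N cs.
  by move=> l; apply: IH.
exists (F ++ flatten [seq Fl l | l <- enum 'I_cmax]); split.
  move=> x /[!mem_cat] /orP [/FP //|/flattenP [_ /mapP [l _ ->]] /(Flmin l).1 []//].
move=> y Py; have [le_cmax|lt_cmax] := leqP cmax (c y).
  have [x xF le_xy] := Fmin y Py; exists x; first by rewrite mem_cat xF.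
  by rewrite /= le_xy andbT (leq_trans _ le_cmax) // (leq_bigmax_seq x xF).
have [x xFl le_xy] := (Flmin (Ordinal lt_cmax)).2 y (conj Py erefl).
exists x; first by rewrite mem_cat; apply/orP; right; apply/flattenP;
  exists (Fl (Ordinal lt_cmax)) => //; apply: map_f; rewrite mem_enum.
by rewrite /= le_xy andbT ((Flmin _).1 x xFl).2.
Qed.

Lemma big_seq_partition (T V : eqType) (M : nmodType) (s : seq T) (k : T -> V)
    (P : pred T) (F : T -> M) :
  \sum_(x <- s | P x) F x =
  \sum_(v <- undup (map k s)) \sum_(x <- s | P x && (k x == v)) F x.
Proof.
rewrite -(exchange_big_dep xpredT) //= big_seq_cond [RHS]big_seq_cond.
apply: eq_bigr => x /andP [xs _]; rewrite (eq_bigl (pred1 (k x))); last first.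
  by move=> v; rewrite /= eq_sym.
by rewrite big_const_seq count_uniq_mem ?undup_uniq // mem_undup map_f //= addr0.
Qed.

Section Toric.
Variables (m n : nat) (A : 'M[int]_(m, n)).

Lemma eq_Aapp (u v : 'I_n -> int) j : u =1 v -> Aapp A u j = Aapp A v j.
Proof. by move=> uv; apply: eq_bigr => i _; rewrite uv. Qed.

Lemma AappD (u v : 'I_n -> int) j : Aapp A (fun i => u i + v i) j = Aapp A u j + Aapp A v j.
Proof. by rewrite /Aapp -big_split; apply: eq_bigr => i _; rewrite mulrDr. Qed.

Lemma AappB (u v : 'I_n -> int) j : Aapp A (fun i => u i - v i) j = Aapp A u j - Aapp A v j.
Proof. by rewrite /Aapp -sumrB; apply: eq_bigr => i _; rewrite mulrBr. Qed.

Lemma posp_sub_negp (u : 'I_n -> int) i : mexp (posp u) i - mexp (negp u) i = u i.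
Proof.
rewrite /mexp !mnmE; case: (leP 0 (u i)) => [u_ge0|u_lt0].
  by rewrite subr0 gez0_abs.
by rewrite sub0r ltz0_abs // opprK.
Qed.

(* The A-degree is a finite function so that fibers can be compared with [==]. *)
Definition Adeg (mu : 'X_{1..n}) : {ffun 'I_m -> int} := [ffun j => Aapp A (mexp mu) j].

Lemma AdegD a b : Adeg (a + b)%MM = Adeg a + Adeg b.
Proof.
apply/ffunP => j; rewrite !ffunE -AappD.
by apply: eq_Aapp => i; rewrite /mexp mnmDE PoszD.
Qed.

Lemma eq_Adeg_kerZ a b : Adeg a = Adeg b <-> kerZ A (fun i => mexp a i - mexp b i).
Proof.
split => [/ffunP ab j|abA]; first by move: (ab j); rewrite !ffunE AappB => ->; rewrite subrr.
by apply/ffunP => j; rewrite !ffunE; apply/eqP; rewrite -subr_eq0 -AappB abA.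
Qed.

Lemma Adeg_posp_negp (u : 'I_n -> int) : Adeg (posp u) = Adeg (negp u) <-> kerZ A u.
Proof.
have E j : Aapp A (fun i => mexp (posp u) i - mexp (negp u) i) j = Aapp A u j.
  by apply: eq_Aapp => i; rewrite posp_sub_negp.
split => [/eq_Adeg_kerZ uA j | uA]; first by rewrite -E.
by apply/eq_Adeg_kerZ => j; rewrite E.
Qed.

Variable K : fieldType.
Implicit Types (f g h : {mpoly K[n]}).

Definition fiber_sum (s : seq 'X_{1..n}) f (b : {ffun 'I_m -> int}) :=
  \sum_(mu <- s | Adeg mu == b) f@_mu.

Lemma toricE f : toric A f <-> forall b, fiber_sum (msupp f) f b = 0.
Proof.
have fiberE (b : 'I_m -> int) mu :
    [forall j, Aapp A (mexp mu) j == b j] = (Adeg mu == [ffun j => b j]).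
  apply/forallP/eqP => [Ab|/ffunP E j]; last by move: (E j); rewrite !ffunE => ->.
  by apply/ffunP => j; rewrite !ffunE; apply/eqP.
split => fA b; last first.
  by rewrite -[RHS](fA [ffun j => b j]); apply: eq_bigl => mu; rewrite fiberE.
rewrite -[RHS](fA b); apply: eq_bigl => mu; rewrite fiberE; congr (_ == _).
by apply/ffunP => j; rewrite ffunE.
Qed.

Lemma fiber_sum_supp s f b : uniq s -> {subset msupp f <= s} ->
  fiber_sum s f b = fiber_sum (msupp f) f b.
Proof.
move=> s_uniq f_s; rewrite /fiber_sum (bigID (fun mu => mu \in msupp f)) /=.
rewrite [X in _ + X]big1 ?addr0; last by move=> mu /andP [_ /memN_msupp_eq0].
rewrite (eq_bigl (fun mu => (mu \in msupp f) && (Adeg mu == b))); last first.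
  by move=> mu; rewrite andbC.
rewrite -big_filter_cond; apply/perm_big/uniq_perm; rewrite ?filter_uniq ?msupp_uniq //.
by move=> mu; rewrite mem_filter andb_idr //; apply: f_s.
Qed.

Lemma fiber_sumD s f g b : fiber_sum s (f + g) b = fiber_sum s f b + fiber_sum s g b.
Proof. by rewrite -big_split; apply: eq_bigr => mu _; rewrite mcoeffD. Qed.

Lemma fiber_sumZ s c f b : fiber_sum s (c *: f) b = c * fiber_sum s f b.
Proof. by rewrite mulr_sumr; apply: eq_bigr => mu _; rewrite mcoeffZ. Qed.

Lemma toric0 : toric A (0 : {mpoly K[n]}).
Proof. by apply/toricE => b; rewrite /fiber_sum big1 // => mu _; rewrite mcoeff0. Qed.

Lemma toricD f g : toric A f -> toric A g -> toric A (f + g).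
Proof.
move=> /toricE fA /toricE gA; apply/toricE => b.
set s := undup (msupp f ++ msupp g); have s_uniq : uniq s by apply: undup_uniq.
have [fs gs] : {subset msupp f <= s} /\ {subset msupp g <= s}.
  by split=> mu mu_supp; rewrite mem_undup mem_cat mu_supp ?orbT.
rewrite -(fiber_sum_supp _ s_uniq); last by move=> mu /msuppD_le; rewrite mem_undup.
by rewrite fiber_sumD !fiber_sum_supp // fA gA addr0.
Qed.

Lemma toricZ c f : toric A f -> toric A (c *: f).
Proof.
move=> /toricE fA; apply/toricE => b.
by rewrite -(fiber_sum_supp _ (msupp_uniq f) (@msuppZ_le _ _ c f)) fiber_sumZ fA mulr0.
Qed.

Lemma toricMX f nu : toric A f -> toric A (f * 'X_[nu]).
Proof.
move=> /toricE fA; apply/toricE => b.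
rewrite /fiber_sum (perm_big _ (msuppMX f nu)) big_map -[RHS](fA (b - Adeg nu)).
apply: eq_big => [mu|mu _]; last by rewrite mcoeffMX.
by rewrite AdegD; apply/eqP/eqP => [<-|->]; rewrite addrC ?addKr ?subrK.
Qed.

Lemma toricM h f : toric A f -> toric A (h * f).
Proof.
move=> fA; rewrite (mpolyE h) mulr_suml.
elim/big_ind: _ => //; [exact: toric0 | exact: toricD|].
by move=> mu _; rewrite -scalerAl mulrC; apply/toricZ/toricMX.
Qed.

Lemma toric_ideal_gen (S : {mpoly K[n]} -> Prop) :
  subset_of S (toric A) -> subset_of (ideal_gen S) (toric A).
Proof. by apply: ideal_gen_ind; [exact: toric0 | exact: toricD | exact: toricM]. Qed.

Lemma toric_binomE (u : 'I_n -> int) : toric A (binom K u) <-> kerZ A u.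
Proof.
rewrite -Adeg_posp_negp toricE.
have [pn_eq | pn] := eqVneq (posp u) (negp u).
  rewrite pn_eq; split=> // _ b.
  by rewrite /binom pn_eq subrr /fiber_sum big1 // => mu _; rewrite mcoeff0.
have binomE b : fiber_sum (msupp (binom K u)) (binom K u) b =
    (Adeg (posp u) == b)%:R - (Adeg (negp u) == b)%:R.
  rewrite -(fiber_sum_supp (s := [:: posp u; negp u])); first last.
  - by move=> mu /msuppB_le; rewrite mem_cat !msuppX !inE.
  - by rewrite /= inE pn.
  rewrite /fiber_sum !big_cons big_nil addr0 /binom !mcoeffB !mcoeffX !eqxx.
  rewrite [negp u == posp u]eq_sym (negbTE pn) subr0.
  by case: (Adeg (posp u) == b); case: (Adeg (negp u) == b); rewrite /= ?mulr0n ?mulr1n; ring.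
split => [fiber0|pnA b]; last by rewrite binomE pnA subrr.
apply/eqP; apply: contra_eqT (fiber0 (Adeg (posp u))) => pnA.
by rewrite binomE eqxx [_ == Adeg (posp u)]eq_sym (negbTE pnA) subr0 oner_eq0.
Qed.

End Toric.

Lemma Adeg_kerZ_sub (m m' n : nat) (A : 'M[int]_(m, n)) (A' : 'M[int]_(m', n)) a b :
  subset_of (kerZ A') (kerZ A) -> Adeg A' a = Adeg A' b -> Adeg A a = Adeg A b.
Proof. by move=> A'A /eq_Adeg_kerZ /A'A /eq_Adeg_kerZ. Qed.

Lemma toric_kerZ_sub (K : fieldType) (m m' n : nat) (A : 'M[int]_(m, n))
    (A' : 'M[int]_(m', n)) :
  subset_of (kerZ A') (kerZ A) -> subset_of (toric A') (toric A : {mpoly K[n]} -> Prop).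
Proof.
move=> A'A f /toricE fA'; apply/toricE => b; rewrite /fiber_sum.
rewrite (big_seq_partition _ (Adeg A')) big1_seq // => _ /[!mem_undup] /mapP [mu0 mu0f ->].
have [<- | Nb] := eqVneq (Adeg A mu0) b.
  rewrite -[RHS](fA' (Adeg A' mu0)) big_seq_cond [RHS]big_seq_cond.
  apply: eq_bigl => mu; case: (mu \in msupp f) => //=.
  by apply: andb_idl => /eqP /(Adeg_kerZ_sub A'A) ->.
apply: big1 => mu /andP [Ab /eqP A'mu].
by move: Ab; rewrite (Adeg_kerZ_sub A'A A'mu) (negbTE Nb).
Qed.

Section Generators.
Variables (K : fieldType) (m n : nat) (A : 'M[int]_(m, n)).
Local Notation poly := {mpoly K[n]}.

Definition monomial_diffs (p : poly) : Prop :=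
  exists a b, Adeg A a = Adeg A b /\ p = 'X_[a] - 'X_[b].

Lemma toric_monomial_diffs : subset_of (toric A) (ideal_gen monomial_diffs).
Proof.
move=> f /toricE fA; set s := msupp f.
(* Write x^mu = (x^mu - x^(rep mu)) + x^(rep mu) for a representative [rep] of
   the A-degree of mu; the second parts cancel fiber by fiber. *)
pose rep b := nth 0%MM s (find (fun x => Adeg A x == b) s).
have Adeg_rep mu : mu \in s -> Adeg A (rep (Adeg A mu)) = Adeg A mu.
  move=> mus; apply/eqP/(nth_find 0%MM (a := fun x => Adeg A x == Adeg A mu)).
  by apply/hasP; exists mu.
have -> : f = \sum_(mu <- s) f@_mu *: ('X_[mu] - 'X_[rep (Adeg A mu)]) +
              \sum_(mu <- s) f@_mu *: 'X_[rep (Adeg A mu)].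
  by rewrite -big_split /= [LHS]mpolyE; apply: eq_bigr => mu _; rewrite -scalerDr subrK.
rewrite [X in _ + X](big_seq_partition _ (Adeg A)) [X in _ + X]big1 ?addr0; last first.
  move=> b _; rewrite (eq_bigr (fun mu => f@_mu *: 'X_[rep b])) => [|mu /eqP -> //].
  by rewrite -scaler_suml [X in X *: _]fA scale0r.
rewrite big_seq; apply: ideal_gen_sum => mu mus; rewrite -mul_mpolyC.
by apply/ideal_genM/ideal_gen_mem; exists mu, (rep (Adeg A mu)); rewrite Adeg_rep.
Qed.

Lemma monomial_diff_binom (a b : 'X_{1..n}) :
  'X_[a] - 'X_[b] =
  'X_[[multinom minn (a i) (b i) | i < n]] * binom K (fun i => mexp a i - mexp b i).
Proof.
rewrite /binom mulrBr -!mpolyXD; congr ('X_[_] - 'X_[_]); apply/mnmP => i;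
  by rewrite !mnmE /mexp addnC; case: ifP => h; lia.
Qed.

Section Reduction.
Variable F : seq ('X_{1..n} * 'X_{1..n}).
Hypothesis F_homog : forall p, p \in F -> Adeg A p.1 = Adeg A p.2 /\ p.1 != p.2.
Hypothesis F_below : forall a b, Adeg A a = Adeg A b -> a != b ->
  exists2 p, p \in F & (p.1 <= a)%MM && (p.2 <= b)%MM.

Lemma monomial_diffs_reduce :
  subset_of monomial_diffs
    (ideal_gen (fun q => exists2 p, p \in F & q = 'X_[p.1] - 'X_[p.2])).
Proof.
move=> _ [a [b [ab ->]]].
elim: {a b}(mdeg a + mdeg b)%N.+1 {-2}a {-2}b (ltnSn (mdeg a + mdeg b)) ab => //.
move=> N IH a b ltN ab.
have [<- | Nab] := eqVneq a b; first by rewrite subrr; apply: ideal_gen0.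
have [[a' b'] p_F /andP /= [le_a le_b]] := F_below ab Nab.
have [a'b' Na'b'] := F_homog p_F; rewrite /= in a'b' Na'b'.
have -> : 'X_[a] - 'X_[b] =
    'X_[a - a'] * ('X_[a'] - 'X_[b']) + 'X_[b'] * ('X_[a - a'] - 'X_[b - b']) :> poly.
  rewrite -{1}(submK le_a) -{1}(submK le_b) !mpolyXD; ring.
apply/ideal_genD/ideal_genM; first by apply/ideal_genM/ideal_gen_mem; exists (a', b').
apply: IH; last first.
  move: (AdegD A (a - a') a') (AdegD A (b - b') b').
  by rewrite !submK // ab a'b' => -> /addIr.
have := mdegD (a - a') a'; have := mdegD (b - b') b'; rewrite !submK //.
suff : (0 < mdeg a' + mdeg b')%N by lia.
by rewrite lt0n addn_eq0 !mdeg_eq0; apply: contra Na'b' => /andP [/eqP -> /eqP ->].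
Qed.

End Reduction.

Lemma toric_binomial_basis : exists gs : seq poly,
  (forall q, q \in gs -> exists2 u, kerZ A u & q = binom K u) /\
  same_set (ideal_gen (fun q => q \in gs)) (toric A).
Proof.
pose P (p : 'X_{1..n} * 'X_{1..n}) := Adeg A p.1 = Adeg A p.2 /\ p.1 != p.2.
(* Dickson's lemma for the componentwise order on pairs of exponents. *)
pose cs := [seq (fun p : 'X_{1..n} * 'X_{1..n} => p.1 i) | i <- enum 'I_n] ++
           [seq (fun p : 'X_{1..n} * 'X_{1..n} => p.2 i) | i <- enum 'I_n].
have [F [F_homog F_min]] := dickson cs P.
have F_below a b : Adeg A a = Adeg A b -> a != b ->
    exists2 p, p \in F & (p.1 <= a)%MM && (p.2 <= b)%MM.
  move=> ab Nab; have [p pF] := F_min (a, b) (conj ab Nab).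
  rewrite all_cat !all_map => /andP [/allP le_a /allP le_b].
  by exists p => //; apply/andP; split; apply/forallP => i;
    [apply: le_a | apply: le_b]; rewrite -enumT mem_enum.
pose gs := [seq binom K (fun i => mexp p.1 i - mexp p.2 i) | p <- F].
have gs_binom q : q \in gs -> exists2 u, kerZ A u & q = binom K u.
  case/mapP => p /F_homog [pA _] ->.
  by exists (fun i => mexp p.1 i - mexp p.2 i); first exact/eq_Adeg_kerZ.
exists gs; split => // f; split.
  by apply: toric_ideal_gen => q /gs_binom [u uA ->]; apply/toric_binomE.
move=> /toric_monomial_diffs; apply: ideal_gen_trans => q.
move=> /(monomial_diffs_reduce F_homog F_below); apply: ideal_gen_trans.
move=> _ [[a b] pF ->]; rewrite monomial_diff_binom.
by apply/ideal_genM/ideal_gen_mem/mapP; exists (a, b).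
Qed.

End Generators.

Section Spans.
Variable n : nat.
Implicit Types (L D : ('I_n -> int) -> Prop) (u w : 'I_n -> int) (v : 'I_n -> rat).

Definition rowv u : 'rV[rat]_n := \row_i (u i)%:~R.

Lemma kerQ_intr (m : nat) (A : 'M[int]_(m, n)) u :
  kerQ A (fun i => (u i)%:~R) <-> kerZ A u.
Proof.
have AappE j : \sum_i (A j i)%:~R * (u i)%:~R = (Aapp A u j)%:~R :> rat.
  by rewrite /Aapp rmorph_sum /=; apply: eq_bigr => i _; rewrite intrM.
split => uA j; last by rewrite AappE uA.
by apply/eqP; rewrite -(intr_eq0 rat) -AappE uA.
Qed.

Lemma spanQ_mem L u : L u -> spanQ L (fun i => (u i)%:~R).
Proof.
by move=> Lu; exists 1%N, (fun _ => 1), (fun _ => u); split=> // i; rewrite big_ord1 mul1r.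
Qed.

Lemma spanQ_mono L L' : subset_of L L' -> subset_of (spanQ L) (spanQ L').
Proof. by move=> LL' v [k [c [w [Lw vE]]]]; exists k, c, w; split=> // l; apply/LL'. Qed.

Lemma spanQ_kerQ (m : nat) (A : 'M[int]_(m, n)) L :
  subset_of L (kerZ A) -> subset_of (spanQ L) (kerQ A).
Proof.
move=> LA v [k [c [w [Lw vE]]]] j.
under eq_bigr => i _ do rewrite vE mulr_sumr.
rewrite exchange_big big1 // => l _.
under eq_bigr => i _ do rewrite mulrCA.
by rewrite -mulr_sumr (kerQ_intr A (w l)).2 ?mulr0 //; apply: LA.
Qed.

Lemma span_proper_kerZ (m : nat) (A : 'M[int]_(m, n)) L :
  span_proper A L -> subset_of L (kerZ A).
Proof. by move=> [LA _] u /spanQ_mem /LA /kerQ_intr. Qed.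

Lemma span_proper_sub (m : nat) (A : 'M[int]_(m, n)) L L' :
  subset_of L' L -> span_proper A L -> span_proper A L'.
Proof.
move=> L'L [LA [v [vA vNL]]]; split; first by move=> w /(spanQ_mono L'L) /LA.
by exists v; split=> // /(spanQ_mono L'L).
Qed.

Lemma finite_row_basis D : exists k (M : 'M[rat]_(k, n)),
  (forall l, exists2 w, D w & row l M = rowv w) /\ forall u, D u -> (rowv u <= M)%MS.
Proof.
pose Q r := exists k (M : 'M[rat]_(k, n)),
  (forall l, exists2 w, D w & row l M = rowv w) /\ \rank M = r.
have Q0 : exists r, `[< Q r >].
  by exists 0%N; apply/asboolP; exists 0%N, 0; split; [case | rewrite mxrank0].
have Qn r : `[< Q r >] -> (r <= n)%N.
  by move=> /asboolP [k [M [_ <-]]]; apply: rank_leq_col.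
case: (ex_maxnP Q0 Qn) => r /asboolP [k [M [M_D rkM]]] max_r.
exists k, M; split=> // u Du.
pose C := col_mx M (rowv u).
have C_D l : exists2 w, D w & row l C = rowv w.
  case: (split_ordP l) => l' ->; first by rewrite rowKu; apply: M_D.
  by exists u; rewrite // rowKd; apply/rowP => i; rewrite !mxE.
have C_M : (C <= M)%MS.
  have /mxrank_leqif_sup/geq_leqif <- : (M <= C)%MS by rewrite -addsmxE addsmxSl.
  by rewrite rkM; apply/max_r/asboolP; exists (k + 1)%N, C.
by apply: submx_trans C_M; rewrite -addsmxE addsmxSr.
Qed.

Lemma submx_spanQ D k (M : 'M[rat]_(k, n)) v :
  (forall l, exists2 w, D w & row l M = rowv w) -> (\row_i v i <= M)%MS -> spanQ D v.
Proof.
move=> /fin_all_exists2 [w Dw M_w] /submxP [X vXM].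
exists k, (fun l => X 0 l), w; split=> // i.
move/rowP/(_ i): vXM; rewrite !mxE => ->; apply: eq_bigr => l _.
by move/rowP/(_ i): (M_w l); rewrite !mxE => ->.
Qed.

Lemma clear_denominators v :
  exists2 d : int, d != 0 & exists z : 'I_n -> int, forall i, (z i)%:~R = v i * d%:~R.
Proof.
exists (\prod_i denq (v i)).
  by rewrite prodf_seq_neq0; apply/allP => i _; rewrite denq_neq0.
exists (fun i => numq (v i) * \prod_(j | j != i) denq (v j)) => i.
rewrite [X in _ = _ * X%:~R](bigD1 i) //= !intrM mulrA -numqE.
by congr (_ * _); congr (_%:~R); apply: eq_bigl => j; rewrite andTb.
Qed.

End Spans.

Section KernelRefinement.
Variables (m n : nat) (A : 'M[int]_(m, n)) (D : ('I_n -> int) -> Prop).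

Lemma span_proper_separating : span_proper A D ->
  exists z : 'I_n -> int, (forall u, D u -> \sum_i z i * u i = 0) /\
    exists2 u0, kerZ A u0 & \sum_i z i * u0 i != 0.
Proof.
move=> [DA [v [vA vND]]]; have [k [M [M_D D_M]]] := finite_row_basis D.
(* As v is not in the row space of M, a column of cokermx M separates v from D. *)
have /existsP [j vj] : [exists j, (\row_i v i *m cokermx M) 0 j != 0].
  apply: contraNT (introN idP (contra_not (submx_spanQ M_D) vND)) => /existsPn v0.
  by rewrite submxE; apply/eqP/rowP => j; rewrite [RHS]mxE; apply/eqP/negPn/v0.
pose c i := cokermx M i j.
have c_D u : D u -> \sum_i (u i)%:~R * c i = 0.
  move=> /D_M /submxP [X uXM]; have := congr1 (fun N => (N *m cokermx M) 0 j) uXM.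
  rewrite -mulmxA mulmx_coker mulmx0 !mxE => uc0; rewrite -[RHS]uc0.
  by apply: eq_bigr => i _; rewrite mxE.
have c_v : \sum_i v i * c i != 0.
  by move: vj; rewrite mxE; under eq_bigr => i _ do rewrite mxE.
have [dc dc0 [z zE]] := clear_denominators c.
have [dv dv0 [u0 u0E]] := clear_denominators v.
have zE' (w : 'I_n -> rat) (x : 'I_n -> int) : (forall i, (x i)%:~R = w i) ->
    (\sum_i z i * x i)%:~R = dc%:~R * \sum_i w i * c i :> rat.
  move=> xw; rewrite rmorph_sum mulr_sumr /=; apply: eq_bigr => i _.
  by rewrite intrM zE xw; ring.
exists z; split.
  move=> u Du; apply/eqP; rewrite -(intr_eq0 rat) (zE' _ _ (fun i => erefl)).
  by rewrite c_D ?mulr0.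
exists u0.
  apply/kerQ_intr => j'; under eq_bigr => i _ do rewrite u0E mulrA.
  by rewrite -mulr_suml vA mul0r.
rewrite -(intr_eq0 rat) (zE' _ _ u0E) mulf_eq0 intr_eq0 negb_or dc0 /=.
under eq_bigr => i _ do rewrite mulrAC.
by rewrite -mulr_suml mulf_eq0 intr_eq0 negb_or c_v.
Qed.

Lemma kerZ_col_mx (z : 'I_n -> int) u :
  kerZ (col_mx A (\row_i z i)) u <-> kerZ A u /\ \sum_i z i * u i = 0.
Proof.
have AappU j : Aapp (col_mx A (\row_i z i)) u (lshift 1 j) = Aapp A u j.
  by apply: eq_bigr => i _; rewrite col_mxEu.
have AappD : Aapp (col_mx A (\row_i z i)) u (rshift m ord0) = \sum_i z i * u i.
  by apply: eq_bigr => i _; rewrite col_mxEd mxE.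
split=> [uA | [uA uz] j]; first by split=> [j|]; rewrite -?AappU -?AappD uA.
by case: (split_ordP j) => j' ->; rewrite ?AappU ?(ord1 j') ?AappD.
Qed.

Lemma span_proper_kerZ_refinement : span_proper A D ->
  exists m' (A' : 'M[int]_(m', n)), [/\ subset_of D (kerZ A'),
    subset_of (kerZ A') (kerZ A) & exists2 u0, kerZ A u0 & ~ kerZ A' u0].
Proof.
move=> DA; have [z [z_D [u0 u0A u0z]]] := span_proper_separating DA.
exists (m + 1)%N, (col_mx A (\row_i z i)); split.
- by move=> u Du; apply/kerZ_col_mx; split; [exact: span_proper_kerZ DA u Du | apply: z_D].
- by move=> u /kerZ_col_mx [].
- by exists u0 => // /kerZ_col_mx [_ /eqP]; apply/negP.
Qed.

End KernelRefinement.

Lemma proper_toric_subideal (K : fieldType) (m n : nat) (A : 'M[int]_(m, n))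
    (J : {mpoly K[n]} -> Prop) :
  is_toric_ideal J -> subset_of J (toric A) -> ~ same_set J (toric A) ->
  exists L (gs : seq {mpoly K[n]}), [/\ span_proper A L,
    forall q, q \in gs -> exists2 u, L u & q = binom K u &
    same_set (ideal_gen (fun q => q \in gs)) J].
Proof.
move=> [m' [A' [_ JA']]] JA NJA.
have A'A : subset_of (kerZ A') (kerZ A).
  by move=> u /(toric_binomE _ K) /JA' /JA /toric_binomE.
have [v vA vNA'] : exists2 v, kerQ A v & ~ kerQ A' v.
  apply: contrapT => noV; apply: NJA => f; split=> [/JA //|fA].
  apply/JA'; apply: toric_kerZ_sub fA.
  move=> u /kerQ_intr uA; apply/kerQ_intr; apply: contrapT => uNA'.
  by apply: noV; exists (fun i => (u i)%:~R).
have [gs [gs_binom gsA']] := toric_binomial_basis K A'.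
exists (kerZ A'), gs; split=> //; last by move=> f; rewrite gsA' JA'.
split; first exact: spanQ_kerQ.
by exists v; split=> // /(spanQ_kerQ (fun u (uA' : kerZ A' u) => uA')).
Qed.

Section ClosureSplitting.
Variables (K : fieldType) (m n : nat) (A : 'M[int]_(m, n)).
Local Notation poly := {mpoly K[n]}.
Variable cl : (poly -> Prop) -> poly -> Prop.
Hypothesis cl_mono : forall J J', subset_of J J' -> subset_of (cl J) (cl J').
Hypothesis cl_ext : forall J, subset_of J (cl J).
Hypothesis cl_idem : forall J, subset_of (cl (cl J)) (cl J).

Lemma cl_same J J' : same_set J J' -> same_set (cl J) (cl J').
Proof. by move=> JJ' f; split; apply: cl_mono => g /JJ'. Qed.

Definition min_gens_cl (S J : poly -> Prop) : Prop :=
  same_set (cl (ideal_gen S)) J /\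
  forall S', subset_of S' S -> same_set (cl (ideal_gen S')) J -> subset_of S S'.

Definition toric_cl_decomposition (s : nat) : Prop :=
  exists I : 'I_s -> poly -> Prop,
    (forall i, is_toric_ideal (I i)) /\ (forall i, ~ same_set (I i) (toric A)) /\
    same_set (toric A) (cl (sum_ideals I)).

Definition binomial_cl_splitting (s : nat) : Prop :=
  exists (C : ('I_n -> int) -> Prop) (Cs : 'I_s -> ('I_n -> int) -> Prop),
    subset_of C (kerZ A) /\ min_gens_cl (@binoms K n C) (toric A) /\
    same_set C (fun u => exists i, Cs i u) /\ forall i, span_proper A (Cs i).

Lemma toric_cl_decomposition_splitting s :
  toric_cl_decomposition s -> binomial_cl_splitting s.
Proof.
move=> [I [I_toric [I_proper I_sum]]].
have I_A i : subset_of (I i) (toric A).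
  move=> p Ip; apply/I_sum/cl_ext; apply: sum_ideals_mem Ip => j.
  by have [m' [A' [_ ->]]] := I_toric j; apply: toric0.
have /fin_all_exists [L /fin_all_exists [gs /all_and3 [L_proper gs_binom gs_I]]] :
  forall i, exists L (gs : seq poly), [/\ span_proper A L,
    forall q, q \in gs -> exists2 u, L u & q = binom K u &
    same_set (ideal_gen (fun q => q \in gs)) (I i)].
  by move=> i; apply: proper_toric_subideal.
pose G := flatten [seq gs i | i <- enum 'I_s].
have G_sum : same_set (ideal_gen (fun p => p \in G)) (sum_ideals I).
  move=> f; rewrite (ideal_gen_ext (@mem_flatten_ord _ _ gs) f) ideal_gen_bigcup.
  exact: sum_ideals_ext gs_I f.
pose P S := same_set (cl (ideal_gen S)) (toric A).
have P_ext S1 S2 : same_set S1 S2 -> P S1 -> P S2.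
  by move=> S12 PS1 f; rewrite -PS1; apply: (cl_same (ideal_gen_ext _)) => p; rewrite S12.
have PG : P (fun p => p \in G) by move=> f; rewrite I_sum; apply: (cl_same G_sum).
have [S SG [PS S_min]] := minimal_subset P_ext PG.
pose Cs i u := L i u /\ S (binom K u).
have C_S : same_set (@binoms K n (fun u => exists i, Cs i u)) S.
  move=> p; split=> [[u [[i [_ Su]] ->]] // | Sp].
  have /mem_flatten_ord [i p_gs] := SG p Sp; have [u Lu pE] := gs_binom i p p_gs.
  by exists u; split=> //; exists i; split=> //; rewrite -pE.
exists (fun u => exists i, Cs i u), Cs; split; [|split; [|split]].
- by move=> u [i [Lu _]]; apply: span_proper_kerZ (L_proper i) u Lu.
- split=> [|S' S'C PS' p /C_S Sp]; first by apply: P_ext PS => p; rewrite C_S.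
  by apply: (S_min S') => // q /S'C /C_S.
- by move=> u; split.
- by move=> i; apply: span_proper_sub (L_proper i) => u [].
Qed.

Lemma binomial_cl_splitting_decomposition s :
  pointed A -> binomial_cl_splitting s -> toric_cl_decomposition s.
Proof.
move=> hA [C [Cs [CA [[C_gen _] [C_Cs Cs_proper]]]]].
have /fin_all_exists [mi /fin_all_exists [Ai /all_and3 [Cs_Ai Ai_A Ai_proper]]] :
  forall i, exists m' (A' : 'M[int]_(m', n)), [/\ subset_of (Cs i) (kerZ A'),
    subset_of (kerZ A') (kerZ A) & exists2 u0, kerZ A u0 & ~ kerZ A' u0].
  by move=> i; apply: span_proper_kerZ_refinement.
pose I i : poly -> Prop := toric (Ai i).
have sum_A : subset_of (sum_ideals I) (toric A).
  move=> f [g [g_Ai ->]]; elim/big_ind: _ => //; [exact: toric0 | exact: toricD |].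
  by move=> i _; apply: toric_kerZ_sub (g_Ai i).
have C_sum : subset_of (ideal_gen (@binoms K n C)) (sum_ideals I).
  have C_Cs' : subset_of (@binoms K n C) (fun p => exists i, @binoms K n (Cs i) p).
    by move=> _ [u [/C_Cs [i Csu] ->]]; exists i, u.
  move=> f /(ideal_gen_mono C_Cs') /ideal_gen_bigcup.
  apply: sum_ideals_mono => i; apply: toric_ideal_gen => _ [u [Csu ->]].
  by apply/toric_binomE/Cs_Ai.
exists I; split; [|split].
- by move=> i; exists (mi i), (Ai i); split=> // u /Ai_A; apply: hA.
- move=> i Ai_eq; have [u0 u0A u0NAi] := Ai_proper i.
  by apply/u0NAi/(toric_binomE _ K)/Ai_eq/toric_binomE.
move=> f; split=> [/C_gen | /(cl_mono sum_A) f_clA]; first exact: cl_mono.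
by apply/C_gen/cl_idem; apply: cl_mono f_clA => g /C_gen.
Qed.

Lemma toric_cl_decompositionP s :
  pointed A -> toric_cl_decomposition s <-> binomial_cl_splitting s.
Proof.
move=> hA; split; first exact: toric_cl_decomposition_splitting.
exact: binomial_cl_splitting_decomposition.
Qed.

End ClosureSplitting.

Theorem theorem2p1 (K : fieldType) (m n : nat) (A : 'M[int]_(m, n))
    (hA : pointed A) (s : nat) (hs : (1 <= s)%N) :
  ((exists I : 'I_s -> {mpoly K[n]} -> Prop,
       (forall i, is_toric_ideal (I i)) /\
       (forall i, ~ same_set (I i) (toric A)) /\
       same_set (toric A) (sum_ideals I))
   <->
   (exists (C : ('I_n -> int) -> Prop) (Cs : 'I_s -> ('I_n -> int) -> Prop),
       subset_of C (kerZ A) /\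
       min_bin_gens (@binoms K n C) (toric A) /\
       same_set C (fun u => exists i, Cs i u) /\
       (forall i, span_proper A (Cs i))))
  /\
  ((exists I : 'I_s -> {mpoly K[n]} -> Prop,
       (forall i, is_toric_ideal (I i)) /\
       (forall i, ~ same_set (I i) (toric A)) /\
       same_set (toric A) (radI (sum_ideals I)))
   <->
   (exists (C : ('I_n -> int) -> Prop) (Cs : 'I_s -> ('I_n -> int) -> Prop),
       subset_of C (kerZ A) /\
       min_bin_gens_rad (@binoms K n C) (toric A) /\
       same_set C (fun u => exists i, Cs i u) /\
       (forall i, span_proper A (Cs i)))).
Proof.
pose id_cl (J : {mpoly K[n]} -> Prop) := J.
have id_mono J J' : subset_of J J' -> subset_of (id_cl J) (id_cl J') by [].
split.
  exact: (toric_cl_decompositionP id_mono (fun J f Jf => Jf) (fun J f Jf => Jf) s hA).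
exact: (toric_cl_decompositionP (@radI_mono K n) (@radI_ext K n) (@radI_idem K n) s hA).
Qed.
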